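(* Let $\mathfrak{R}$ be an alternative ring with a nontrivial idempotent $e_1$ and Peirce decomposition $\mathfrak{R}=\mathfrak{R}_{11}\oplus\mathfrak{R}_{12}\oplus\mathfrak{R}_{21}\oplus\mathfrak{R}_{22}$, satisfying: (i) if $a_{11}\in\mathfrak{R}_{11}$, $a_{22}\in\mathfrak{R}_{22}$ and $[a_{11}+a_{22},\mathfrak{R}_{12}]=0$, then $a_{11}+a_{22}\in\mathcal{Z}(\mathfrak{R})$; (ii) if $a_{11}\in\mathfrak{R}_{11}$, $a_{22}\in\mathfrak{R}_{22}$ and $[a_{11}+a_{22},\mathfrak{R}_{21}]=0$, then $a_{11}+a_{22}\in\mathcal{Z}(\mathfrak{R})$. Let $\mathcal{D}$ be a multiplicative Lie-type derivation of $\mathfrak{R}$. Then for $i\in\{1,2\}$ and any $a_{ii},b_{ii}\in\mathfrak{R}_{ii}$ there exists $z_{a_{ii},b_{ii}}\in\mathcal{Z}(\mathfrak{R})$ such that $\mathcal{D}(a_{ii}+b_{ii})=\mathcal{D}(a_{ii})+\mathcal{D}(b_{ii})+z_{a_{ii},b_{ii}}$.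
   Context: Rings are not assumed associative or unital. The associator is $(x,y,z)=(xy)z-x(yz)$; $\mathfrak{R}$ is alternative if $(x,x,y)=0=(y,x,x)$ for all $x,y$. $[x,y]=xy-yx$ and $\mathcal{Z}(\mathfrak{R})=\{r: [r,x]=0\ \forall x\in\mathfrak{R}\}$. Define $p_1(x)=x$, $p_n(x_1,\dots,x_n)=[p_{n-1}(x_1,\dots,x_{n-1}),x_n]$. For $n\ge2$, a (not necessarily additive) map $\mathcal{D}\colon\mathfrak{R}\to\mathfrak{R}$ is a multiplicative Lie $n$-derivation if $\mathcal{D}(p_n(x_1,\dots,x_n))=\sum_{i=1}^n p_n(x_1,\dots,\mathcal{D}(x_i),\dots,x_n)$ for all $x_i\in\mathfrak{R}$; a multiplicative Lie-type derivation is a multiplicative Lie $n$-derivation for some $n\ge2$. A nontrivial idempotent is $e_1\ne0$ with $e_1^2=e_1$ which is not a multiplicative identity. With $e_2a:=a-e_1a$, $ae_2:=a-ae_1$, set $\mathfrak{R}_{ij}=e_i\mathfrak{R}e_j$ ($i,j=1,2$), so $\mathfrak{R}=\bigoplus_{i,j}\mathfrak{R}_{ij}$. *)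

From mathcomp Require Import all_boot all_algebra.
Set Implicit Arguments. Unset Strict Implicit. Unset Printing Implicit Defensive.
Import GRing.Theory.
Local Open Scope ring_scope.

Definition is_nonassoc_ring (V : zmodType) (mul : V -> V -> V) : Prop :=
  (forall x y z, mul (x + y) z = mul x z + mul y z) /\
  (forall x y z, mul x (y + z) = mul x y + mul x z).

Definition assoc (V : zmodType) (mul : V -> V -> V) (x y z : V) : V :=
  mul (mul x y) z - mul x (mul y z).

Definition alternative (V : zmodType) (mul : V -> V -> V) : Prop :=
  forall x y, assoc mul x x y = 0 /\ assoc mul y x x = 0.

Definition commutator (V : zmodType) (mul : V -> V -> V) (x y : V) : V :=
  mul x y - mul y x.

Definition center (V : zmodType) (mul : V -> V -> V) (r : V) : Prop :=
  forall x, commutator mul r x = 0.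

(* p_1(x) = x, p_n(x_1,...,x_n) = [p_{n-1}(x_1,...,x_{n-1}), x_n].
   p_seq acc [:: y_1; ...; y_k] = [...[[acc, y_1], y_2], ..., y_k]. *)
Fixpoint p_seq (V : zmodType) (mul : V -> V -> V) (acc : V) (xs : seq V) : V :=
  match xs with
  | [::] => acc
  | y :: ys => p_seq mul (commutator mul acc y) ys
  end.

(* p_n (x_1,...,x_n) for x : 'I_n -> V (x_1 is x at index 0); p_0 := 0 (unused). *)
Definition p_n (V : zmodType) (mul : V -> V -> V) (n : nat) (x : 'I_n -> V) : V :=
  match [seq x i | i <- enum 'I_n] with
  | [::] => 0
  | x1 :: xs => p_seq mul x1 xs
  end.

Definition lie_n_derivation (V : zmodType) (mul : V -> V -> V) (n : nat)
  (D : V -> V) : Prop :=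
  forall x : 'I_n -> V,
    D (p_n mul x) =
    \sum_(i < n) p_n mul (fun j => if j == i then D (x j) else x j).

Definition lie_type_derivation (V : zmodType) (mul : V -> V -> V) (D : V -> V) : Prop :=
  exists n : nat, (2 <= n)%N /\ lie_n_derivation mul n D.

Definition nontrivial_idempotent (V : zmodType) (mul : V -> V -> V) (e : V) : Prop :=
  e <> 0 /\ mul e e = e /\ ~ (forall x, mul e x = x /\ mul x e = x).

(* Peirce components: e_i a with e_2 a := a - e_1 a, a e_2 := a - a e_1 *)
Definition lmul_e (V : zmodType) (mul : V -> V -> V) (e : V) (i : bool) (a : V) : V :=
  if i then mul e a else a - mul e a.
Definition rmul_e (V : zmodType) (mul : V -> V -> V) (e : V) (j : bool) (a : V) : V :=
  if j then mul a e else a - mul a e.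

(* x \in R_ij  (index true = 1, false = 2);  R_ij = (e_i R) e_j *)
Definition peirce (V : zmodType) (mul : V -> V -> V) (e : V) (i j : bool) (x : V) : Prop :=
  exists a, x = rmul_e mul e j (lmul_e mul e i a).

From mathcomp Require Import all_boot all_algebra.
Set Implicit Arguments. Unset Strict Implicit. Unset Printing Implicit Defensive.
Import GRing.Theory.
Local Open Scope ring_scope.

(* Write ad z = [z, e].  Filling all but the first two slots of the Lie n-identity with e
   gives D (ad^m [y, w]) = ad^m ([D y, w] + [y, D w]) + G [y, w] with G additive and
   m >= 1.  The map ad vanishes on R11 + R22 (the elements commuting with e), is -1 on R12
   and 1 on R21.  For a, b in R_ii let T = D (a + b) - D a - D b.  The identity at
   (a + b, e) gives ad^m [T, e] = 0, hence T lies in R11 + R22.  For x in R12 the element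
   v = - [b, x] of R12 satisfies [a + v, e + x] = [a + b, x].  Here D (a + v) and D (e + x)
   are additive up to central terms, by the same argument with R21 in place of R12 (this
   is where (ii) is used); so expanding D ad^m of both sides leaves ad^m [T, x] = 0, i.e.
   [T, R12] = 0, and T is central by (i). *)

Lemma set_nth_nseq (T : Type) (x0 a y : T) n k : (k < n)%N ->
  set_nth x0 (nseq n a) k y = nseq k a ++ y :: nseq (n - k.+1) a.
Proof. by elim: n k => [|n IHn] [|k] //= ltkn; rewrite ?subn1 // IHn. Qed.

Section NonassocRing.
Variables (V : zmodType) (mul : V -> V -> V).
Hypothesis Hring : is_nonassoc_ring mul.

Local Notation "x ** y" := (mul x y) (at level 40, left associativity).
Local Notation cm := (commutator mul).

Lemma morph_add0 (f : V -> V) : {morph f : x y / x + y} -> f 0 = 0.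
Proof. by move=> fD; apply: (@addrI _ (f 0)); rewrite -fD !addr0. Qed.

Lemma morph_addN (f : V -> V) : {morph f : x y / x + y} -> {morph f : x / - x}.
Proof.
by move=> fD x; apply: (@addrI _ (f x)); rewrite -fD !subrr (morph_add0 fD).
Qed.

Lemma mulDl z : {morph mul^~ z : x y / x + y}.
Proof. by move=> x y; case: Hring. Qed.
Lemma mulDr x : {morph mul x : y z / y + z}.
Proof. by move=> y z; case: Hring. Qed.
Lemma mul0l x : 0 ** x = 0.
Proof. exact: morph_add0 (mulDl x). Qed.
Lemma mul0r x : x ** 0 = 0.
Proof. exact: morph_add0 (mulDr x). Qed.
Lemma mulNl x y : (- x) ** y = - (x ** y).
Proof. exact: (morph_addN (mulDl y) x). Qed.
Lemma mulNr x y : x ** (- y) = - (x ** y).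
Proof. exact: (morph_addN (mulDr x) y). Qed.
Lemma mulBl x y z : (x - y) ** z = x ** z - y ** z.
Proof. by rewrite mulDl mulNl. Qed.
Lemma mulBr x y z : x ** (y - z) = x ** y - x ** z.
Proof. by rewrite mulDr mulNr. Qed.

Lemma commDl z : {morph cm^~ z : x y / x + y}.
Proof. by move=> x y; rewrite /commutator mulDl mulDr opprD addrACA. Qed.
Lemma commDr x : {morph cm x : y z / y + z}.
Proof. by move=> y z; rewrite /commutator mulDl mulDr opprD addrACA. Qed.
Lemma comm0l x : cm 0 x = 0.
Proof. exact: morph_add0 (commDl x). Qed.
Lemma comm0r x : cm x 0 = 0.
Proof. exact: morph_add0 (commDr x). Qed.
Lemma commNl x y : cm (- x) y = - cm x y.
Proof. exact: (morph_addN (commDl y) x). Qed.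
Lemma comm_centerr y z : center mul z -> cm y z = 0.
Proof. by move=> zZ; rewrite /commutator -opprB -/(cm z y) zZ oppr0. Qed.

Variable e : V.

Definition ade z := cm z e.

Lemma iter_adeD m : {morph iter m ade : x y / x + y}.
Proof. by elim: m => [//|m IHm] x y /=; rewrite IHm /ade commDl. Qed.
Lemma iter_ade0 m : iter m ade 0 = 0.
Proof. exact: morph_add0 (iter_adeD m). Qed.
Lemma iter_adeB m x y : iter m ade (x - y) = iter m ade x - iter m ade y.
Proof. by rewrite iter_adeD (morph_addN (iter_adeD m)). Qed.

(* The terms of D (p_{m+2} (y, w, e, ..., e)) in which D hits one of the m copies of e. *)
Definition lie_defect m (D : V -> V) z :=
  \sum_(k < m) iter (m - k.+1) ade (cm (iter k ade z) (D e)).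

Lemma lie_defectD m D : {morph lie_defect m D : x y / x + y}.
Proof.
move=> x y; rewrite -big_split; apply: eq_bigr => k _.
by rewrite iter_adeD commDl iter_adeD.
Qed.

Definition lie_iter_identity m (D : V -> V) := forall y w,
  D (iter m ade (cm y w)) =
  iter m ade (cm (D y) w + cm y (D w)) + lie_defect m D (cm y w).

Lemma p_seq_cat z s1 s2 : p_seq mul z (s1 ++ s2) = p_seq mul (p_seq mul z s1) s2.
Proof. by elim: s1 z => //= x s1 IHs1 z; rewrite IHs1. Qed.

Lemma p_seq_nseq z k : p_seq mul z (nseq k e) = iter k ade z.
Proof. by elim: k z => //= k IHk z; rewrite IHk -iterSr. Qed.

Lemma p_n_nth n (x : 'I_n.+2 -> V) y w t : size t = n ->
  (forall i, x i = nth 0 [:: y, w & t] i) -> p_n mul x = p_seq mul (cm y w) t.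
Proof.
move=> szt xE; rewrite /p_n (eq_map xE) (map_comp (nth 0 _) val) val_enum_ord.
rewrite -/(mkseq (nth 0 [:: y, w & t]) n.+2) -szt.
by rewrite (mkseq_nth 0 [:: y, w & t]).
Qed.

Lemma lie_n_derivation_iter n D :
  lie_n_derivation mul n.+2 D -> lie_iter_identity n D.
Proof.
move=> HD y w; set s := [:: y, w & nseq n e].
have := HD (fun i => nth 0 s i).
rewrite (p_n_nth (y := y) (w := w) (t := nseq n e)) ?size_nseq // p_seq_nseq => ->.
rewrite !big_ord_recl iter_adeD -addrA; congr (_ + (_ + _)).
- rewrite (p_n_nth (y := D y) (w := w) (t := nseq n e)) ?size_nseq ?p_seq_nseq //.
  by case=> [[|[|j]] ltjn].
- rewrite (p_n_nth (y := y) (w := D w) (t := nseq n e)) ?size_nseq ?p_seq_nseq //.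
  by case=> [[|[|j]] ltjn].
apply: eq_bigr => k _.
rewrite (p_n_nth (y := y) (w := w) (t := set_nth 0 (nseq n e) k (D e))).
- by rewrite set_nth_nseq // p_seq_cat p_seq_nseq /= p_seq_nseq.
- by rewrite size_set_nth size_nseq; apply/maxn_idPr.
case=> [[|[|j]] ltjn] //=; rewrite nth_set_nth -val_eqE /= /bump !add1n !eqSS.
by case: eqP => [->|//]; rewrite nth_nseq ltn_ord.
Qed.

Lemma lie_2_derivation_iter D : lie_n_derivation mul 2 D -> lie_iter_identity 1 D.
Proof.
move=> /lie_n_derivation_iter HD y w.
have Dcomm y' w' : D (cm y' w') = cm (D y') w' + cm y' (D w').
  by have := HD y' w'; rewrite /lie_defect big_ord0 addr0.
by rewrite /= /ade Dcomm [D (cm y w)]Dcomm /lie_defect big_ord1 commDl.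
Qed.

(* For n = 2 the identity is iterated once, so that always m >= 1: ad^m must kill R11 + R22. *)
Lemma lie_type_derivation_iter D :
  lie_type_derivation mul D -> exists2 m, (0 < m)%N & lie_iter_identity m D.
Proof.
case=> -[|[|[|n]]] [//= _ HD]; first by exists 1%N => //; apply: lie_2_derivation_iter.
by exists n.+1 => //; apply: lie_n_derivation_iter.
Qed.

Section Alternative.
Hypothesis Halt : alternative mul.
Hypothesis He : e ** e = e.

Local Notation as_ := (assoc mul).

Lemma assocDl x x' y z : as_ (x + x') y z = as_ x y z + as_ x' y z.
Proof. by rewrite /assoc !mulDl opprD addrACA. Qed.
Lemma assocDm x y y' z : as_ x (y + y') z = as_ x y z + as_ x y' z.
Proof. by rewrite /assoc mulDr !mulDl mulDr opprD addrACA. Qed.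
Lemma assocDr x y z z' : as_ x y (z + z') = as_ x y z + as_ x y z'.
Proof. by rewrite /assoc !mulDr opprD addrACA. Qed.

Lemma assoc_swap12 x y z : as_ x y z = - as_ y x z.
Proof.
apply/eqP; rewrite -addr_eq0; have := (Halt (x + y) z).1.
by rewrite assocDl !assocDm (Halt x z).1 (Halt y z).1 add0r addr0 => ->.
Qed.

Lemma assoc_swap23 x y z : as_ x y z = - as_ x z y.
Proof.
apply/eqP; rewrite -addr_eq0; have := (Halt (y + z) x).2.
by rewrite assocDr !assocDm (Halt y x).2 (Halt z x).2 add0r addr0 addrC => ->.
Qed.

Lemma assoc_cycle x y z : as_ x y z = as_ z x y.
Proof. by rewrite assoc_swap23 assoc_swap12 opprK. Qed.

Lemma assoc_flex x y : as_ x y x = 0.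
Proof. by rewrite assoc_swap12 (Halt x y).2 oppr0. Qed.

Lemma mul_idem_l z : e ** (e ** z) = e ** z.
Proof. by apply/esym/subr0_eq; have := (Halt e z).1; rewrite /assoc He. Qed.
Lemma mul_idem_r z : (z ** e) ** e = z ** e.
Proof. by apply/subr0_eq; have := (Halt e z).2; rewrite /assoc He. Qed.
Lemma mul_idem_flex z : (e ** z) ** e = e ** (z ** e).
Proof. by apply/subr0_eq; rewrite -(assoc_flex e z). Qed.

Definition in_peirce (i j : bool) x :=
  e ** x = (if i then x else 0) /\ x ** e = (if j then x else 0).

Local Notation R11 := (in_peirce true true).
Local Notation R12 := (in_peirce true false).
Local Notation R21 := (in_peirce false true).
Local Notation R22 := (in_peirce false false).

Lemma peirceP i j x : peirce mul e i j x <-> in_peirce i j x.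
Proof.
split=> [[a ->]|[ex xe]]; last first.
  by exists x; case: i ex; case: j xe => /= xe ex; rewrite ?ex ?subr0 ?xe ?subr0.
have eb : e ** lmul_e mul e i a = if i then lmul_e mul e i a else 0.
  by case: i => /=; rewrite ?mulBr mul_idem_l ?subrr.
move: (lmul_e mul e i a) eb => b eb; split; case: j => /=.
- by rewrite -mul_idem_flex eb; case: (i); rewrite ?mul0l.
- by rewrite mulBr -mul_idem_flex eb; case: (i); rewrite ?mul0l ?subrr.
- by rewrite mul_idem_r.
- by rewrite mulBl mul_idem_r subrr.
Qed.

Lemma in_peirceD i j x y : in_peirce i j x -> in_peirce i j y -> in_peirce i j (x + y).
Proof.
case=> ex xe [ey ye]; split.
- by rewrite mulDr ex ey; case: (i); rewrite ?addr0.
- by rewrite mulDl xe ye; case: (j); rewrite ?addr0.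
Qed.

Lemma in_peirceN i j x : in_peirce i j x -> in_peirce i j (- x).
Proof.
by case=> ex xe; split; rewrite ?mulNl ?mulNr ?ex ?xe; [case: (i) | case: (j)]; rewrite ?oppr0.
Qed.

Definition commute_e x := x ** e = e ** x.

Lemma commute_eD x y : commute_e x -> commute_e y -> commute_e (x + y).
Proof. by rewrite /commute_e mulDl mulDr => -> ->. Qed.

Lemma commute_eN x : commute_e x -> commute_e (- x).
Proof. by rewrite /commute_e mulNl mulNr => ->. Qed.

Lemma in_peirce_diag_commute i x : in_peirce i i x -> commute_e x.
Proof. by case=> ex xe; rewrite /commute_e ex xe. Qed.

Lemma commute_e_peirce_decomp x : commute_e x -> R11 (e ** x) /\ R22 (x - e ** x).
Proof.
move=> xe; have exe : (e ** x) ** e = e ** x by rewrite -xe mul_idem_r.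
by split; split; rewrite /= ?mulBr ?mulBl ?mul_idem_l ?exe ?xe ?subrr.
Qed.

Lemma assoc_mid_e0 p q : as_ p e q = 0 ->
  [/\ as_ q e p = 0, (e ** p) ** q = e ** (p ** q) & (p ** q) ** e = p ** (q ** e)].
Proof.
move=> h; split; [|apply/subr0_eq..].
- by rewrite assoc_swap12 assoc_cycle h oppr0.
- by rewrite -/(as_ e p q) assoc_swap12 h oppr0.
- by rewrite -/(as_ p q e) assoc_swap23 h oppr0.
Qed.

Lemma mul12_11 x t : R12 x -> R11 t -> x ** t = 0.
Proof.
case=> ex xe [et te]; have h : as_ t e x = 0 by rewrite /assoc te ex subrr.
have [] := assoc_mid_e0 h; rewrite /assoc xe et mul0l sub0r.
by move=> /eqP; rewrite oppr_eq0 => /eqP.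
Qed.

Lemma mul22_12 s x : R22 s -> R12 x -> s ** x = 0.
Proof.
case=> es se [ex xe]; have h : as_ x e s = 0 by rewrite /assoc xe es mul0l mul0r subrr.
have [] := assoc_mid_e0 h; rewrite /assoc se ex mul0l sub0r.
by move=> /eqP; rewrite oppr_eq0 => /eqP.
Qed.

Lemma mul11_21 t x : R11 t -> R21 x -> t ** x = 0.
Proof.
case=> et te [ex xe]; have h : as_ x e t = 0 by rewrite /assoc xe et subrr.
by have [] := assoc_mid_e0 h; rewrite /assoc te ex mul0r subr0.
Qed.

Lemma mul21_22 x s : R21 x -> R22 s -> x ** s = 0.
Proof.
case=> ex xe [es se]; have h : as_ s e x = 0 by rewrite /assoc se ex mul0l mul0r subrr.
by have [] := assoc_mid_e0 h; rewrite /assoc xe es mul0r subr0.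
Qed.

Lemma mul11_12 t x : R11 t -> R12 x -> R12 (t ** x).
Proof.
case=> et te [ex xe]; have h : as_ t e x = 0 by rewrite /assoc te ex subrr.
by rewrite /in_peirce /=; have [_ <- ->] := assoc_mid_e0 h; rewrite et xe mul0r.
Qed.

Lemma mul12_22 x s : R12 x -> R22 s -> R12 (x ** s).
Proof.
case=> ex xe [es se]; have h : as_ x e s = 0 by rewrite /assoc xe es mul0l mul0r subrr.
by rewrite /in_peirce /=; have [_ <- ->] := assoc_mid_e0 h; rewrite ex se mul0r.
Qed.

Lemma mul21_11 x t : R21 x -> R11 t -> R21 (x ** t).
Proof.
case=> ex xe [et te]; have h : as_ x e t = 0 by rewrite /assoc xe et subrr.
by rewrite /in_peirce /=; have [_ <- ->] := assoc_mid_e0 h; rewrite ex te mul0l.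
Qed.

Lemma mul22_21 s x : R22 s -> R21 x -> R21 (s ** x).
Proof.
case=> es se [ex xe]; have h : as_ s e x = 0 by rewrite /assoc se ex mul0l mul0r subrr.
by rewrite /in_peirce /=; have [_ <- ->] := assoc_mid_e0 h; rewrite es xe mul0l.
Qed.

Lemma mul12_21_commute u x : R12 u -> R21 x -> commute_e (u ** x).
Proof.
case=> eu ue [ex xe]; have h : as_ u e x = 0 by rewrite /assoc ue ex mul0l mul0r subrr.
by rewrite /commute_e; have [_ <- ->] := assoc_mid_e0 h; rewrite eu xe.
Qed.

Lemma mul21_12_commute x u : R21 x -> R12 u -> commute_e (x ** u).
Proof.
case=> ex xe [eu ue]; have h : as_ x e u = 0 by rewrite /assoc xe eu subrr.
by rewrite /commute_e; have [_ <- ->] := assoc_mid_e0 h; rewrite ex ue mul0l mul0r.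
Qed.

Lemma mul12_self x : R12 x -> x ** x = 0.
Proof.
case=> ex xe; have := assoc_flex x e.
by rewrite /assoc xe ex mul0l sub0r => /eqP; rewrite oppr_eq0 => /eqP.
Qed.

Lemma comm_diag12 T x : commute_e T -> R12 x -> R12 (cm T x).
Proof.
move=> Te x12; have [t11 t22] := commute_e_peirce_decomp Te.
rewrite -[T](subrK (e ** T)) /commutator mulDl mulDr.
rewrite (mul22_12 t22 x12) (mul12_11 x12 t11) add0r addr0.
by apply: in_peirceD; [exact: mul11_12 | apply: in_peirceN; exact: mul12_22].
Qed.

Lemma comm_diag21 T x : commute_e T -> R21 x -> R21 (cm T x).
Proof.
move=> Te x21; have [t11 t22] := commute_e_peirce_decomp Te.
rewrite -[T](subrK (e ** T)) /commutator mulDl mulDr.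
rewrite (mul11_21 t11 x21) (mul21_22 x21 t22) add0r addr0.
by apply: in_peirceD; [exact: mul22_21 | apply: in_peirceN; exact: mul21_11].
Qed.

Lemma comm12_21_commute u x : R12 u -> R21 x -> commute_e (cm u x).
Proof.
move=> u12 x21; apply: commute_eD; first exact: mul12_21_commute.
by apply: commute_eN; exact: mul21_12_commute.
Qed.

Lemma comm_comm12 i b x : in_peirce i i b -> R12 x -> cm (cm b x) x = 0.
Proof.
move=> bii x12; have xx := mul12_self x12.
have flex : (x ** b) ** x = x ** (b ** x) by apply/subr0_eq; exact: assoc_flex.
rewrite /commutator; case: i bii => bii.
- have ralt : (b ** x) ** x = b ** (x ** x) by apply/subr0_eq; exact: (Halt x b).2.
  by rewrite (mul12_11 x12 bii) subr0 ralt -flex xx (mul12_11 x12 bii) mul0l mul0r subrr.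
have lalt : (x ** x) ** b = x ** (x ** b) by apply/subr0_eq; exact: (Halt x b).1.
rewrite (mul22_12 bii x12) sub0r mulNl mulNr flex -lalt xx (mul22_12 bii x12).
by rewrite mul0l mul0r oppr0 subrr.
Qed.

Lemma ade12 p : R12 p -> ade p = - p.
Proof. by case=> ep pe; rewrite /ade /commutator ep pe sub0r. Qed.

Lemma iter_ade12 m p : R12 p -> iter m ade p = if odd m then - p else p.
Proof.
move=> p12; elim: m => //= m ->.
by case: (odd m); rewrite /= ?/ade ?commNl -/(ade p) ade12 ?opprK.
Qed.

Lemma iter_ade12_eq0 m p : R12 p -> iter m ade p = 0 -> p = 0.
Proof.
by move=> p12; rewrite iter_ade12 //; case: (odd m) => // /eqP; rewrite oppr_eq0 => /eqP.
Qed.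

Lemma iter_ade21 m q : R21 q -> iter m ade q = q.
Proof. by case=> eq qe; elim: m => //= m ->; rewrite /ade /commutator eq qe subr0. Qed.

Lemma iter_ade_commute m d : commute_e d -> iter m.+1 ade d = 0.
Proof. by move=> de; rewrite iterSr /ade /commutator de subrr iter_ade0. Qed.

Lemma commute_e_of_iter_ade0 m W : iter m ade (cm W e) = 0 -> commute_e W.
Proof.
(* [W, e] = q - p with p = e W (1 - e) in R12 and q = (1 - e) W e in R21. *)
set p := e ** W - (e ** W) ** e; set q := W ** e - (e ** W) ** e.
have p12 : R12 p.
  split; rewrite /p ?mulBr ?mulBl ?mul_idem_l ?mul_idem_r ?subrr //.
  by rewrite mul_idem_flex mul_idem_l -mul_idem_flex.
have q21 : R21 q.
  by split; rewrite /q ?mulBr ?mulBl ?mul_idem_r // mul_idem_flex mul_idem_l subrr.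
have WeE : cm W e = q - p by rewrite /q /p /commutator opprB addrA subrK.
rewrite WeE iter_adeB (iter_ade21 _ q21) => Wm.
have p0 : p = 0.
  have := congr1 (mul e) Wm; rewrite mulBr (proj1 q21) sub0r mul0r iter_ade12 //.
  by case: (odd m); rewrite ?mulNr ?opprK (proj1 p12) // => /eqP; rewrite oppr_eq0 => /eqP.
move: Wm; rewrite p0 iter_ade0 subr0 => q0.
by apply/subr0_eq; rewrite -/(cm W e) WeE p0 q0 subrr.
Qed.

Lemma center_of_commute_peirce k l :
  (forall a11 a22, peirce mul e true true a11 -> peirce mul e false false a22 ->
    (forall x, peirce mul e k l x -> cm (a11 + a22) x = 0) -> center mul (a11 + a22)) ->
  forall T, commute_e T -> (forall x, in_peirce k l x -> cm T x = 0) -> center mul T.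
Proof.
move=> Hcenter T Te Tc; have [/peirceP t11 /peirceP t22] := commute_e_peirce_decomp Te.
by have := Hcenter _ _ t11 t22; rewrite addrC subrK; apply=> x /peirceP; exact: Tc.
Qed.

Section LieTypeDerivation.
Variables (D : V -> V) (m : nat).
Hypothesis m_gt0 : (0 < m)%N.
Hypothesis Dlie : lie_iter_identity m D.
Hypothesis center_by12 :
  forall T, commute_e T -> (forall x, R12 x -> cm T x = 0) -> center mul T.
Hypothesis center_by21 :
  forall T, commute_e T -> (forall x, R21 x -> cm T x = 0) -> center mul T.

Definition lie_rhs y Y w W := iter m ade (cm Y w + cm y W) + lie_defect m D (cm y w).

Lemma D_iter_comm y w : D (iter m ade (cm y w)) = lie_rhs y (D y) w (D w).
Proof. exact: Dlie. Qed.

Lemma lie_rhsDl y1 y2 Y1 Y2 w W :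
  lie_rhs (y1 + y2) (Y1 + Y2) w W = lie_rhs y1 Y1 w W + lie_rhs y2 Y2 w W.
Proof.
by rewrite /lie_rhs !commDl lie_defectD [X in iter m ade X]addrACA [in LHS]iter_adeD addrACA.
Qed.

Lemma lie_rhsDr y Y w1 w2 W1 W2 :
  lie_rhs y Y (w1 + w2) (W1 + W2) = lie_rhs y Y w1 W1 + lie_rhs y Y w2 W2.
Proof.
by rewrite /lie_rhs !commDr lie_defectD [X in iter m ade X]addrACA [in LHS]iter_adeD addrACA.
Qed.

Lemma lie_rhs_addl y Y Y' w W :
  lie_rhs y (Y + Y') w W = lie_rhs y Y w W + iter m ade (cm Y' w).
Proof. by rewrite /lie_rhs commDl [X in iter m ade X]addrAC [in LHS]iter_adeD addrAC. Qed.

Lemma lie_rhs_centerl y Y z w W : center mul z -> lie_rhs y (Y + z) w W = lie_rhs y Y w W.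
Proof. by move=> zZ; rewrite lie_rhs_addl zZ iter_ade0 addr0. Qed.

Lemma lie_rhs_centerr y Y w W z : center mul z -> lie_rhs y Y w (W + z) = lie_rhs y Y w W.
Proof. by move=> zZ; rewrite /lie_rhs commDr (comm_centerr _ zZ) addr0. Qed.

Lemma D0 : D 0 = 0.
Proof.
have := D_iter_comm 0 0.
by rewrite /lie_rhs !comm0l comm0r addr0 iter_ade0 (morph_add0 (lie_defectD _ _)) addr0.
Qed.

Lemma lie_rhs_iter0 y w : iter m ade (cm y w) = 0 -> lie_rhs y (D y) w (D w) = 0.
Proof. by move=> yw0; rewrite -D_iter_comm yw0 D0. Qed.

Lemma lie_rhs_comm0 y w : cm y w = 0 -> lie_rhs y (D y) w (D w) = 0.
Proof. by move=> yw0; rewrite lie_rhs_iter0 // yw0 iter_ade0. Qed.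

Lemma D_add_commute_e_12 a u : commute_e a -> R12 u ->
  exists z, center mul z /\ D (a + u) = D a + D u + z.
Proof.
move=> ae u12; set W := D (a + u) - (D a + D u).
have DE : D (a + u) = D a + D u + W by rewrite /W [RHS]addrC subrK.
have ae0 : cm a e = 0 by rewrite /commutator ae subrr.
have We : commute_e W.
  apply: (@commute_e_of_iter_ade0 m); have := D_iter_comm (a + u) e.
  rewrite commDl ae0 add0r D_iter_comm DE lie_rhs_addl lie_rhsDl (lie_rhs_comm0 ae0) add0r.
  by move/esym/(canRL (addKr _)); rewrite addNr.
have Wx x : R21 x -> cm W x = 0.
  move=> x21; have ux0 : iter m ade (cm u x) = 0.
    by case: m m_gt0 => // k _; apply/iter_ade_commute/comm12_21_commute.
  have := D_iter_comm (a + u) x.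
  rewrite commDl iter_adeD ux0 addr0 D_iter_comm DE lie_rhs_addl lie_rhsDl.
  rewrite (lie_rhs_iter0 ux0) addr0 => /esym/(canRL (addKr _)); rewrite addNr.
  by rewrite iter_ade21 //; exact: comm_diag21.
by exists W; split; first exact: center_by21.
Qed.

Lemma D_add_peirce_diag i a b : commute_e a -> in_peirce i i b ->
  exists z, center mul z /\ D (a + b) = D a + D b + z.
Proof.
move=> ae bii; have be := in_peirce_diag_commute bii.
set T := D (a + b) - (D a + D b).
have DE : D (a + b) = D a + D b + T by rewrite /T [RHS]addrC subrK.
have ae0 : cm a e = 0 by rewrite /commutator ae subrr.
have be0 : cm b e = 0 by rewrite /commutator be subrr.
have Te : commute_e T.
  apply: (@commute_e_of_iter_ade0 m); have := D_iter_comm (a + b) e.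
  rewrite commDl ae0 be0 add0r iter_ade0 D0 DE lie_rhs_addl lie_rhsDl.
  by rewrite (lie_rhs_comm0 ae0) (lie_rhs_comm0 be0) !add0r.
have Tx x : R12 x -> cm T x = 0.
  (* v is chosen so that [a + v, e + x] = [a + b, x], with a + v and e + x of the
     shape handled by D_add_commute_e_12. *)
  move=> x12; set v := - cm b x.
  have v12 : R12 v by apply/in_peirceN/comm_diag12.
  have vx0 : cm v x = 0 by rewrite /v commNl (comm_comm12 bii x12) oppr0.
  have ve : cm v e = cm b x by rewrite -/(ade v) ade12 // opprK.
  have [z1 [z1Z Dav]] := D_add_commute_e_12 ae v12.
  have [z2 [z2Z Dex]] := D_add_commute_e_12 (erefl : commute_e e) x12.
  have avex : cm (a + v) (e + x) = cm (a + b) x.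
    by rewrite !commDl !commDr ae0 vx0 ve add0r addr0.
  have := D_iter_comm (a + v) (e + x).
  rewrite avex Dav Dex lie_rhs_centerl // lie_rhs_centerr // lie_rhsDl !lie_rhsDr.
  rewrite (lie_rhs_comm0 ae0) (lie_rhs_comm0 vx0) add0r addr0.
  have -> : lie_rhs v (D v) e (D e) = lie_rhs b (D b) x (D x) by rewrite -!D_iter_comm ve.
  rewrite D_iter_comm DE lie_rhs_addl lie_rhsDl => /(canRL (addKr _)); rewrite addNr.
  exact: iter_ade12_eq0 (comm_diag12 Te x12).
by exists T; split; first exact: center_by12.
Qed.

End LieTypeDerivation.

End Alternative.

End NonassocRing.

Theorem lemma2p5 (V : zmodType) (mul : V -> V -> V) (e1 : V) (D : V -> V)
  (Hring : is_nonassoc_ring mul)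
  (Halt : alternative mul)
  (He1 : nontrivial_idempotent mul e1)
  (Hi : forall a11 a22, peirce mul e1 true true a11 -> peirce mul e1 false false a22 ->
          (forall x, peirce mul e1 true false x -> commutator mul (a11 + a22) x = 0) ->
          center mul (a11 + a22))
  (Hii : forall a11 a22, peirce mul e1 true true a11 -> peirce mul e1 false false a22 ->
          (forall x, peirce mul e1 false true x -> commutator mul (a11 + a22) x = 0) ->
          center mul (a11 + a22))
  (HD : lie_type_derivation mul D) :
  forall (i : bool) (a b : V), peirce mul e1 i i a -> peirce mul e1 i i b ->
    exists z, center mul z /\ D (a + b) = D a + D b + z.
Proof.
have He : mul e1 e1 = e1 by case: He1 => _ [].
have [m m_gt0 Dlie] := lie_type_derivation_iter Hring e1 HD.
have center12 := center_of_commute_peirce Hring Halt He Hi.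
have center21 := center_of_commute_peirce Hring Halt He Hii.
move=> i a b /(peirceP Hring Halt He) aii /(peirceP Hring Halt He) bii.
apply: (D_add_peirce_diag Hring Halt He m_gt0 Dlie center12 center21 _ bii).
exact: in_peirce_diag_commute aii.
Qed.
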